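(* Let $W:\mathcal X\to\mathcal Y$ be a DMC with $|\mathcal Y|>2|\mathcal X|$ and fix any input distribution. Then there exist two distinct output letters $\alpha,\beta\in\mathcal Y$ whose merger yields a channel $Q$ with $$I(W)-I(Q)\le \mu(|\mathcal X|)\,|\mathcal Y|^{-\frac{|\mathcal X|+1}{|\mathcal X|-1}},$$ where $\mu(n)=\frac{2}{n-1}\nu(n)$.
   Context: $\mathcal X,\mathcal Y$ are finite disjoint sets with $|\mathcal X|\ge 2$; $W:\mathcal X\to\mathcal Y$ is a discrete memoryless channel with transition probabilities $W(y|x)$. An input distribution $\pi(x)>0$ is fixed and output probabilities $\pi(y)=\sum_x\pi(x)W(y|x)$ are assumed positive. $I(\cdot)$ denotes input–output mutual information (natural log) under this input distribution. Merging two distinct output letters $\alpha,\beta$ produces the channel $Q$ with output alphabet $(\mathcal Y\setminus\{\alpha,\beta\})\cup\{\gamma\}$, $Q(\gamma|x)=W(\alpha|x)+W(\beta|x)$ and $Q(y|x)=W(y|x)$ otherwise. The constant is $$\nu(n)=\frac{\pi n(n-1)}{2\left(\sqrt{1+\frac{1}{2(n-1)}}-1\right)^2}\left(\frac{2n}{\Gamma\!\left(1+\frac{n-1}{2}\right)}\right)^{\frac{2}{n-1}},$$ with $\pi=3.14159\ldots$ and $\Gamma$ the Gamma function. *)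

From mathcomp Require Import all_boot.
From Stdlib Require Import Reals.

Set Implicit Arguments.
Unset Strict Implicit.
Unset Printing Implicit Defensive.

Definition Rsum {I : finType} (F : I -> R) : R := \big[Rplus/0%R]_(i : I) F i.

(* output probabilities pi(y) = sum_x pi(x) W(y|x);  W x y stands for W(y|x) *)
Definition outprob {X Y : finType} (pi : X -> R) (W : X -> Y -> R) (y : Y) : R :=
  Rsum (fun x => (pi x * W x y)%R).

Definition xlogdiv (a b : R) : R :=
  if Req_EM_T a 0 then 0%R else (a * ln (a / b))%R.

Definition mutinfo {X Y : finType} (pi : X -> R) (W : X -> Y -> R) : R :=
  Rsum (fun x => Rsum (fun y => (pi x * xlogdiv (W x y) (outprob pi W y))%R)).

(* output alphabet of the merged channel: (Y \ {alpha,beta}) u {gamma},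
   gamma is represented by None *)
Definition merged_out (Y : finType) (a b : Y) : finType :=
  option {y : Y | (y != a) && (y != b)}.

Definition merge_letters {X Y : finType} (W : X -> Y -> R) (a b : Y) :
    X -> merged_out a b -> R :=
  fun x o => match o with
             | None => (W x a + W x b)%R
             | Some y => W x (val y)
             end.

(* gamma_half k = Gamma(1 + k/2), via Gamma(1)=1, Gamma(3/2)=sqrt(pi)/2,
   Gamma(s+1) = s Gamma(s) *)
Fixpoint gamma_half (k : nat) : R :=
  match k with
  | O => 1%R
  | S O => (sqrt PI / 2)%R
  | S (S j as k') => ((1 + INR j / 2) * gamma_half j)%R
  end.

Definition nu (n : nat) : R :=
  ((PI * INR n * (INR n - 1)) /
     (2 * (sqrt (1 + 1 / (2 * (INR n - 1))) - 1) ^ 2) *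
   Rpower (2 * INR n / gamma_half (n - 1)) (2 / (INR n - 1)))%R.

Definition mu (n : nat) : R := (2 / (INR n - 1) * nu n)%R.

Arguments merge_letters {X Y} W a b _ _.

From HB Require Import structures.
From mathcomp Require Import all_boot zify.
From Stdlib Require Import Reals Lra Psatz Classical.

(* Merging two letters [y1, y2] costs, input by input, at most a chi-square term, which is
   bounded by [2 max(p y1, p y2)] times the squared distance of the unit vectors
   [z y = (sqrt P(x | y))_x]. By Markov's inequality at least half of the letters have
   [p y <= 2 / |Y|]. The nonnegative part of the unit sphere is covered by [n N^(n-1)] cells of
   squared diameter at most [(n^2 - 1) / N^2]: a pivot coordinate of weight at least [1/n]
   together with a grid of mesh [1/N] on the other coordinates. Once [|Y| > 2 n N^(n-1)], two
   such letters share a cell, and choosing [N] maximal gives a bound of order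
   [|Y|^(-(n+1)/(n-1))]; its constant is dominated by [mu n] thanks to
   [Gamma (1 + k/2) <= ((k + 2) / 2)^(k/2)] and [sqrt (1 + t) <= 1 + t/2]. *)

Open Scope R_scope.

Lemma Rplus_associative : associative Rplus. Proof. by move=> *; ring. Qed.
HB.instance Definition _ :=
  Monoid.isComLaw.Build R 0 Rplus Rplus_associative Rplus_comm Rplus_0_l.

Section RealSums.
Context {I : finType}.
Implicit Types (P : pred I) (F G : I -> R).

Lemma big_Rle P F G : (forall i, P i -> F i <= G i) ->
  \big[Rplus/0]_(i | P i) F i <= \big[Rplus/0]_(i | P i) G i.
Proof. by move=> FG; apply: (big_ind2 (fun a b => a <= b)) => // *; lra. Qed.

Lemma big_Rge0 P F : (forall i, P i -> 0 <= F i) -> 0 <= \big[Rplus/0]_(i | P i) F i.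
Proof. by move=> F0; apply: (big_ind (fun a => 0 <= a)) => // *; lra. Qed.

Lemma big_Rmult_l P c F :
  \big[Rplus/0]_(i | P i) (c * F i) = c * \big[Rplus/0]_(i | P i) F i.
Proof. by apply: (big_rec2 (fun a b => a = c * b)) => [|i a b _ ->]; ring. Qed.

Lemma big_Rplus P F G : \big[Rplus/0]_(i | P i) (F i + G i) =
  \big[Rplus/0]_(i | P i) F i + \big[Rplus/0]_(i | P i) G i.
Proof. by rewrite big_split. Qed.

Lemma big_Ropp P F : \big[Rplus/0]_(i | P i) (- F i) = - \big[Rplus/0]_(i | P i) F i.
Proof. by apply: (big_rec2 (fun a b => a = - b)) => [|i a b _ ->]; ring. Qed.

Lemma big_Rconst P c : \big[Rplus/0]_(i | P i) c = INR #|P| * c.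
Proof.
have -> : #|P| = count P (index_enum I) by rewrite cardE /enum_mem size_filter.
elim: (index_enum I) => [|i r IH]; first by rewrite big_nil /=; ring.
by rewrite big_cons /=; case: (P i); rewrite IH ?add1n ?add0n ?S_INR; ring.
Qed.

Lemma big_Rsqr_le P F :
  (\big[Rplus/0]_(i | P i) F i) ^ 2 <= INR #|P| * \big[Rplus/0]_(i | P i) F i ^ 2.
Proof.
set T := \big[Rplus/0]_(i | P i) F i; set m := INR #|P|.
have [/card0_eq P0 | P_gt0] := posnP #|P|.
  by rewrite /T !big_pred0 //=; lra.
(* Expanding [0 <= sum (m F i - T)^2] gives [0 <= m (m sum F i^2 - T^2)]. *)
have : 0 <= \big[Rplus/0]_(i | P i) (m * F i - T) ^ 2 by apply: big_Rge0 => i _; apply: pow2_ge_0.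
have -> : \big[Rplus/0]_(i | P i) (m * F i - T) ^ 2 =
          \big[Rplus/0]_(i | P i) (m ^ 2 * F i ^ 2 + (- 2 * m * T) * F i + T ^ 2).
  by apply: eq_bigr => i _; ring.
rewrite !big_Rplus !big_Rmult_l big_Rconst -/T -/m.
have : 0 < m by apply: lt_0_INR; apply/ltP.
nra.
Qed.

Lemma Rsum_const c : Rsum (fun _ : I => c) = INR #|I| * c.
Proof. by rewrite /Rsum big_Rconst; congr (INR _ * _); apply: eq_card. Qed.

Lemma Rsum_bigD1 F a : Rsum F = F a + \big[Rplus/0]_(i | i != a) F i.
Proof. by rewrite /Rsum (bigD1 a). Qed.

End RealSums.

Lemma ln_le_sub1 x : 0 < x -> ln x <= x - 1.
Proof. by move=> x_gt0; have := exp_ineq1_le (ln x); rewrite exp_ln //; lra. Qed.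

Lemma xlogdiv0l b : xlogdiv 0 b = 0.
Proof. by rewrite /xlogdiv; case: Req_EM_T => //; lra. Qed.

Lemma xlogdivE a b : a <> 0 -> xlogdiv a b = a * ln (a / b).
Proof. by rewrite /xlogdiv; case: Req_EM_T. Qed.

Lemma xlogdiv_sub_le {a b c} : 0 <= a -> 0 < b -> 0 < c ->
  xlogdiv a b - a * ln c <= a * (a / (b * c) - 1).
Proof.
move=> a_ge0 b_gt0 c_gt0; have [-> | a_gt0] : a = 0 \/ 0 < a by lra.
  by rewrite xlogdiv0l; lra.
have abc_gt0 : 0 < a / (b * c) by apply: Rdiv_lt_0_compat => //; nra.
rewrite xlogdivE; last lra.
have -> : a / b = a / (b * c) * c by field; lra.
rewrite ln_mult //.
have := Rmult_le_compat_l a _ _ (Rlt_le _ _ a_gt0) (ln_le_sub1 _ abc_gt0); lra.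
Qed.

(* At [u = v = 0] both sides vanish, the right one because [x / 0 = 0] in Rocq. *)
Lemma merge_loss_le_chi2 {u v p q} : 0 <= u -> 0 <= v -> 0 < p -> 0 < q ->
  xlogdiv u p + xlogdiv v q - xlogdiv (u + v) (p + q) <=
  (u * q - v * p) ^ 2 / (p * q * (u + v)).
Proof.
move=> u_ge0 v_ge0 p_gt0 q_gt0; have [uv0 | uv_gt0] : u + v = 0 \/ 0 < u + v by lra.
  have [-> ->] : u = 0 /\ v = 0 by lra.
  by rewrite Rplus_0_r !xlogdiv0l /Rdiv; lra.
set c := (u + v) / (p + q).
have c_gt0 : 0 < c by apply: Rdiv_lt_0_compat; lra.
rewrite (xlogdivE (u + v) (p + q)) -/c; last lra.
have := xlogdiv_sub_le u_ge0 p_gt0 c_gt0; have := xlogdiv_sub_le v_ge0 q_gt0 c_gt0.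
suff : u * (u / (p * c) - 1) + v * (v / (q * c) - 1) =
       (u * q - v * p) ^ 2 / (p * q * (u + v)) by lra.
by rewrite /c; field; lra.
Qed.

Lemma hellinger_sq_le {p q K a b} : 0 < p -> 0 < q -> p <= K -> q <= K -> 0 <= a -> 0 <= b ->
  p * q * (a ^ 2 - b ^ 2) ^ 2 <= 2 * K * (a - b) ^ 2 * (p * a ^ 2 + q * b ^ 2).
Proof.
move=> p_gt0 q_gt0 pK qK a_ge0 b_ge0.
have -> : (a ^ 2 - b ^ 2) ^ 2 = (a - b) ^ 2 * (a + b) ^ 2 by ring.
have sum_sq : (a + b) ^ 2 <= 2 * (a ^ 2 + b ^ 2) by have := pow2_ge_0 (a - b); lra.
have weighted : p * q * (a ^ 2 + b ^ 2) <= K * (p * a ^ 2 + q * b ^ 2).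
  have := Rmult_le_pos (K - q) (p * a ^ 2) ltac:(lra) ltac:(have := pow2_ge_0 a; nra).
  have := Rmult_le_pos (K - p) (q * b ^ 2) ltac:(lra) ltac:(have := pow2_ge_0 b; nra).
  lra.
have ab_ge0 := pow2_ge_0 (a - b).
have pq_ab_ge0 : 0 <= p * q * (a - b) ^ 2.
  by apply: Rmult_le_pos => //; apply: Rmult_le_pos; lra.
have := Rmult_le_compat_l _ _ _ pq_ab_ge0 sum_sq.
have := Rmult_le_compat_l (2 * (a - b) ^ 2) _ _ ltac:(lra) weighted.
lra.
Qed.

Lemma merge_loss_le_sqdist w u v p q K :
  0 < w -> 0 <= u -> 0 <= v -> 0 < p -> 0 < q -> p <= K -> q <= K ->
  w * (xlogdiv u p + xlogdiv v q - xlogdiv (u + v) (p + q)) <=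
  2 * K * (sqrt (w * u / p) - sqrt (w * v / q)) ^ 2.
Proof.
move=> w_gt0 u_ge0 v_ge0 p_gt0 q_gt0 pK qK.
set a := sqrt (w * u / p); set b := sqrt (w * v / q).
have a_sq : a ^ 2 = w * u / p.
  by rewrite /a /= Rmult_1_r sqrt_sqrt //; apply: Rmult_le_pos; [nra | apply/Rlt_le/Rinv_0_lt_compat].
have b_sq : b ^ 2 = w * v / q.
  by rewrite /b /= Rmult_1_r sqrt_sqrt //; apply: Rmult_le_pos; [nra | apply/Rlt_le/Rinv_0_lt_compat].
have dist_ge0 : 0 <= 2 * K * (a - b) ^ 2 by have := pow2_ge_0 (a - b); nra.
have := Rmult_le_compat_l w _ _ (Rlt_le _ _ w_gt0) (merge_loss_le_chi2 u_ge0 v_ge0 p_gt0 q_gt0).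
have [uv0 | uv_gt0] : u + v = 0 \/ 0 < u + v by lra.
  by rewrite uv0 Rmult_0_r /Rdiv Rinv_0; lra.
(* In the coordinates [a, b] the chi-square bound reads [p q (a^2 - b^2)^2 / (p a^2 + q b^2)]. *)
have -> : w * ((u * q - v * p) ^ 2 / (p * q * (u + v))) =
          p * q * (a ^ 2 - b ^ 2) ^ 2 / (p * a ^ 2 + q * b ^ 2).
  by rewrite a_sq b_sq; field; repeat split; nra.
have pq_gt0 : 0 < p * a ^ 2 + q * b ^ 2.
  by rewrite a_sq b_sq (_ : _ + _ = w * (u + v)); [nra | field; split; lra].
have := hellinger_sq_le p_gt0 q_gt0 pK qK (sqrt_pos (w * u / p)) (sqrt_pos (w * v / q)).
rewrite -/a -/b => hellinger loss_le; apply: Rle_trans loss_le _.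
apply: (Rmult_le_reg_r _ _ _ pq_gt0); rewrite /Rdiv Rmult_assoc Rinv_l; lra.
Qed.

Lemma big_option_R (T : finType) (F : option T -> R) :
  \big[Rplus/0]_(o : option T) F o = F None + \big[Rplus/0]_(t : T) F (Some t).
Proof.
have -> : index_enum {: option T} = None :: map Some (index_enum T).
  by rewrite /index_enum !unlock /= /option_enum !unlock.
by rewrite big_cons big_map.
Qed.

Lemma outprob_merge_letters (X Y : finType) (pi : X -> R) (W : X -> Y -> R) (a b : Y) :
  outprob pi (merge_letters W a b) None = outprob pi W a + outprob pi W b.
Proof. by rewrite /outprob /Rsum -big_Rplus; apply: eq_bigr => x _ /=; ring. Qed.

Lemma mutinfo_merge_letters (X Y : finType) (W : X -> Y -> R) (pi : X -> R) (a b : Y) :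
  a != b ->
  mutinfo pi W - mutinfo pi (merge_letters W a b) =
  Rsum (fun x => pi x * (xlogdiv (W x a) (outprob pi W a) + xlogdiv (W x b) (outprob pi W b)
        - xlogdiv (W x a + W x b) (outprob pi W a + outprob pi W b))).
Proof.
move=> ab; rewrite /mutinfo {1 2}/Rsum /Rminus -big_Ropp -big_Rplus; apply: eq_bigr => x _.
rewrite /Rsum big_option_R outprob_merge_letters /=.
rewrite -(big_sub (op := Rplus) (idx := 0) (fun y => (y != a) && (y != b))
            (fun y => pi x * xlogdiv (W x y) (outprob pi W y))).
rewrite (bigD1 a) //= (bigD1 b) /=; last by rewrite eq_sym ab.
set kept := (X in _ + (_ + X) + _); set kept' := (X in - (_ + X)).
by have -> : kept' = kept by []; ring.
Qed.

Lemma big_sub_sqr_le (I : finType) (P : pred I) (f g : I -> R) d :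
  (forall i, P i -> 0 <= f i + g i) -> (forall i, P i -> f i - g i <= d) ->
  (\big[Rplus/0]_(i | P i) f i ^ 2) - (\big[Rplus/0]_(i | P i) g i ^ 2) <=
  d * \big[Rplus/0]_(i | P i) (f i + g i).
Proof.
move=> fg_ge0 fg_le; rewrite /Rminus -big_Ropp -big_Rplus -big_Rmult_l.
apply: big_Rle => i Pi /=; rewrite (_ : f i ^ 2 + - g i ^ 2 = (f i - g i) * (f i + g i)); last by ring.
by apply: Rmult_le_compat_r; [apply: fg_ge0 | apply: fg_le].
Qed.

Lemma card_predC1_R (I : finType) (i0 : I) : INR #|(fun i => i != i0)| = INR #|I| - 1.
Proof.
have -> : #|(fun i => i != i0)| = #|predC1 i0| by apply: eq_card.
rewrite cardC1; have : (0 < #|I|)%nat by apply/card_gt0P; exists i0.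
by case: #|I| => // k _; rewrite S_INR /=; ring.
Qed.

Lemma sqr_add_ge a b c : 0 <= a -> 0 <= b -> 0 < c -> c <= a ^ 2 -> c <= b ^ 2 ->
  c * 4 <= (a + b) ^ 2.
Proof.
move=> a_ge0 b_ge0 c_gt0 ca cb.
have : c * c <= (a * b) ^ 2 by rewrite Rpow_mult_distr; apply: Rmult_le_compat; lra.
have := Rmult_le_pos _ _ a_ge0 b_ge0; nra.
Qed.

(* The defect at the pivot is controlled through
   [a x0 ^ 2 - b x0 ^ 2 = sum_(x != x0) (b x ^ 2 - a x ^ 2)], which is at most
   [d * sum_(x != x0) (a x + b x) <= 2 d sqrt (n - 1)], while [a x0 + b x0 >= 2 / sqrt n]. *)
Lemma sqdist_le_of_close_off (X : finType) (a b : X -> R) (x0 : X) d :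
  (forall x, 0 <= a x) -> (forall x, 0 <= b x) ->
  Rsum (fun x => a x ^ 2) = 1 -> Rsum (fun x => b x ^ 2) = 1 ->
  / INR #|X| <= a x0 ^ 2 -> / INR #|X| <= b x0 ^ 2 ->
  (forall x, x != x0 -> Rabs (a x - b x) <= d) ->
  Rsum (fun x => (a x - b x) ^ 2) <= (INR #|X| ^ 2 - 1) * d ^ 2.
Proof.
move=> a_ge0 b_ge0 a_unit b_unit a0_big b0_big ab_close.
rewrite !(Rsum_bigD1 _ x0) in a_unit b_unit *.
have n_ge1 : 1 <= INR #|X| by apply: (le_INR 1); apply/leP/card_gt0P; exists x0.
set n := INR #|X| in n_ge1 a0_big b0_big *.
have ab_ge0 x : 0 <= a x + b x by have := a_ge0 x; have := b_ge0 x; lra.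
set A := \big[Rplus/0]_(x | x != x0) a x ^ 2 in a_unit.
set B := \big[Rplus/0]_(x | x != x0) b x ^ 2 in b_unit.
set T := \big[Rplus/0]_(x | x != x0) (a x + b x).
have off_sqdist : \big[Rplus/0]_(x | x != x0) (a x - b x) ^ 2 <= (n - 1) * d ^ 2.
  rewrite /n -(@card_predC1_R _ x0) -big_Rconst; apply: big_Rle => x /ab_close.
  by rewrite -(pow2_abs (a x - b x)) => h; apply: pow_incr; have := Rabs_pos (a x - b x); lra.
have T_sq : T ^ 2 <= (n - 1) * 4.
  apply: Rle_trans (big_Rsqr_le _ _) _; rewrite card_predC1_R -/n.
  apply: Rmult_le_compat_l; first lra.
  apply: Rle_trans (@big_Rle _ _ _ (fun x => 2 * a x ^ 2 + 2 * b x ^ 2) _) _.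
    by move=> x _; have := pow2_ge_0 (a x - b x); lra.
  rewrite big_Rplus !big_Rmult_l -/A -/B.
  by have := pow2_ge_0 (a x0); have := pow2_ge_0 (b x0); lra.
have AB_le : A - B <= d * T.
  apply: big_sub_sqr_le => x x_off; first exact: ab_ge0.
  exact: Rle_trans (Rle_abs _) (ab_close x x_off).
have BA_le : B - A <= d * T.
  rewrite /T (eq_bigr (fun x => b x + a x)); last by move=> x _; ring.
  apply: big_sub_sqr_le => x x_off; first by rewrite Rplus_comm.
  by apply: Rle_trans (Rle_abs _) _; rewrite Rabs_minus_sym; apply: ab_close.
have pivot_sq : (a x0 ^ 2 - b x0 ^ 2) ^ 2 <= 4 * (n - 1) * d ^ 2.
  have dT : (a x0 ^ 2 - b x0 ^ 2) ^ 2 <= (d * T) ^ 2.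
    rewrite -(pow2_abs (_ - _)) -(pow2_abs (d * T)); apply: pow_incr.
    split; first exact: Rabs_pos.
    by apply: Rle_trans (Rabs_le _ _ _) (Rle_abs _); lra.
  apply: Rle_trans dT _; rewrite Rpow_mult_distr.
  by have := pow2_ge_0 d; nra.
have pivot_sum : 4 / n <= (a x0 + b x0) ^ 2.
  rewrite /Rdiv Rmult_comm; apply: sqr_add_ge => //; apply: Rinv_0_lt_compat; lra.
have pivot_dist : (a x0 - b x0) ^ 2 <= n * (n - 1) * d ^ 2.
  apply: (Rmult_le_reg_l (4 / n)); first by apply: Rdiv_lt_0_compat; lra.
  have -> : 4 / n * (n * (n - 1) * d ^ 2) = 4 * (n - 1) * d ^ 2 by field; lra.
  rewrite (_ : (a x0 ^ 2 - b x0 ^ 2) ^ 2 = (a x0 - b x0) ^ 2 * (a x0 + b x0) ^ 2) in pivot_sq;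
    last by ring.
  have := Rmult_le_compat_l _ _ _ (pow2_ge_0 (a x0 - b x0)) pivot_sum; lra.
by nra.
Qed.

Lemma card_ffun_fixed (X : finType) (N : nat) (x0 : X) :
  #|[set g : {ffun X -> 'I_N.+1} | g x0 == ord0]| = (expn N.+1 #|X|.-1)%nat.
Proof.
have -> : (expn N.+1 #|X|.-1)%nat = #|pffun_on (@ord0 N) (predC1 x0) predT|.
  by rewrite card_pffun_on cardC1 card_ord.
apply: eq_card => g; rewrite inE; apply/eqP/pffun_onP => [g_x0 | [/supportP g_supp _]].
  split; last by move=> ?.
  by apply/supportP => x; rewrite !inE => /negPn/eqP ->.
by apply: g_supp; rewrite !inE eqxx.
Qed.

Lemma card_pivot_cells (X : finType) (N : nat) :
  #|[set c : X * {ffun X -> 'I_N.+1} | c.2 c.1 == ord0]| = (#|X| * expn N.+1 #|X|.-1)%nat.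
Proof.
rewrite -sum1_card (partition_big fst xpredT) //=.
rewrite -sum_nat_const; apply: eq_bigr => x0 _.
rewrite -(@card_ffun_fixed _ N x0) -sum1_card.
rewrite (reindex (fun g => (x0, g))) /=; last first.
  by exists snd => [g _ | [x g] /andP[_ /eqP <-]].
by apply: eq_bigl => g; rewrite !inE eqxx andbT.
Qed.

Lemma exists_ge_mean {I : finType} (F : I -> R) (i0 : I) : exists i, Rsum F / INR #|I| <= F i.
Proof.
apply: NNPP => none_ge.
have n_gt0 : 0 < INR #|I| by apply: lt_0_INR; apply/ltP/card_gt0P; exists i0.
set m := Rsum F / INR #|I|.
have F_lt i : F i < m by apply: Rnot_le_lt => F_ge; apply: none_ge; exists i.
have : Rsum F < Rsum (fun _ : I => m).
  rewrite !(Rsum_bigD1 _ i0).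
  by have := @big_Rle _ (fun i => i != i0) F _ (fun i _ => Rlt_le _ _ (F_lt i)); have := F_lt i0; lra.
by rewrite Rsum_const /m (_ : INR #|I| * _ = Rsum F); [lra | field; lra].
Qed.

Lemma exists_bin (N : nat) r : 0 <= r <= INR N.+1 -> exists k : 'I_N.+1, INR k <= r <= INR k + 1.
Proof.
elim: N => [|N IH] r_bounds.
  by exists ord0; move: r_bounds => /=; lra.
have [r_le | r_gt] := Rle_or_lt r (INR N.+1).
  have [k k_bin] := IH (conj (proj1 r_bounds) r_le).
  by exists (widen_ord (leqnSn _) k).
by exists ord_max; rewrite [nat_of_ord _]/= -S_INR; lra.
Qed.

(* A cell [(x0, g)] records a pivot coordinate [x0] of weight at least [1/n] together with the
   grid index, at mesh [1/(N+1)], of every other coordinate; the index of the pivot itself is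
   normalised to [0], which leaves [n (N+1)^(n-1)] cells. *)
Definition in_pivot_cell {X : finType} (N : nat) (z : X -> R)
    (c : X * {ffun X -> 'I_N.+1}) : Prop :=
  [/\ c.2 c.1 = ord0, / INR #|X| <= z c.1 ^ 2 &
      forall x, x != c.1 -> INR (c.2 x) <= z x * INR N.+1 <= INR (c.2 x) + 1].

Definition unit_nonneg {X : finType} (z : X -> R) :=
  (forall x, 0 <= z x) /\ Rsum (fun x => z x ^ 2) = 1.

Section UnitVectors.
Context {X : finType} {N : nat}.
Implicit Types (a b z : X -> R).

Lemma unit_nonneg_le1 {z} x : unit_nonneg z -> z x <= 1.
Proof.
move=> [z_ge0 z_unit]; apply: Rnot_lt_le => z_gt1.
have := big_Rge0 (fun i => i != x) (fun i => z i ^ 2) (fun i _ => pow2_ge_0 _).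
by move: z_unit; rewrite (Rsum_bigD1 _ x); nra.
Qed.

Lemma exists_pivot_cell {z} : unit_nonneg z -> exists c, in_pivot_cell N z c.
Proof.
move=> z_unit; have [z_ge0 z_sum] := z_unit.
have [x0 x0_big] : exists x0, / INR #|X| <= z x0 ^ 2.
  have [x1 _ | X0] := pickP (xpredT : pred X); last by move: z_sum; rewrite /Rsum big_pred0 //; lra.
  by have [x0] := exists_ge_mean (fun x => z x ^ 2) x1; rewrite z_sum /Rdiv Rmult_1_l; exists x0.
have bin x : exists k : 'I_N.+1, INR k <= z x * INR N.+1 <= INR k + 1.
  apply: exists_bin; have := pos_INR N.+1; have := z_ge0 x; have := unit_nonneg_le1 x z_unit.
  by nra.
have [g g_bin] := fin_all_exists bin.
exists (x0, [ffun x => if x == x0 then ord0 else g x]); split => /=.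
- by rewrite ffunE eqxx.
- done.
- by move=> x x_ne; rewrite ffunE (negbTE x_ne).
Qed.

Lemma sqdist_le_in_pivot_cell {a b c} :
  unit_nonneg a -> unit_nonneg b -> in_pivot_cell N a c -> in_pivot_cell N b c ->
  Rsum (fun x => (a x - b x) ^ 2) <= (INR #|X| ^ 2 - 1) * (/ INR N.+1) ^ 2.
Proof.
move=> [a_ge0 a_unit] [b_ge0 b_unit] [_ a_pivot a_bins] [_ b_pivot b_bins].
apply: (@sqdist_le_of_close_off _ a b c.1) => // x x_ne.
have N_gt0 : 0 < INR N.+1 by apply: lt_0_INR; apply/ltP.
have inv_gt0 : 0 < / INR N.+1 by apply: Rinv_0_lt_compat.
have [a_lo a_hi] := a_bins x x_ne; have [b_lo b_hi] := b_bins x x_ne.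
rewrite (_ : a x - b x = (a x * INR N.+1 - b x * INR N.+1) * / INR N.+1); last by field; lra.
rewrite Rabs_mult (Rabs_right (/ _)); last lra.
rewrite -{2}[/ INR N.+1]Rmult_1_l; apply: Rmult_le_compat_r; first lra.
by apply: Rabs_le; lra.
Qed.

Lemma exists_close_pair {Y : finType} {z : Y -> X -> R} {S : {set Y}} :
  (forall y, unit_nonneg (z y)) -> (#|X| * expn N.+1 #|X|.-1 < #|S|)%nat ->
  exists y1 y2, [/\ y1 \in S, y2 \in S, y1 != y2 &
    Rsum (fun x => (z y1 x - z y2 x) ^ 2) <= (INR #|X| ^ 2 - 1) * (/ INR N.+1) ^ 2].
Proof.
move=> z_unit S_big.
have [cell cell_ok] := fin_all_exists (fun y => exists_pivot_cell (z_unit y)).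
suff [y1 [y2 [S1 S2 y12 same_cell]]] :
    exists y1 y2, [/\ y1 \in S, y2 \in S, y1 != y2 & cell y1 = cell y2].
  exists y1, y2; split => //; apply: (sqdist_le_in_pivot_cell _ _ (cell_ok y1)) => //.
  by rewrite same_cell.
apply: NNPP => no_collision.
have cell_inj : {in S &, injective cell}.
  move=> y1 y2 S1 S2 same_cell; apply: NNPP => /eqP y12.
  by apply: no_collision; exists y1, y2.
move: S_big; rewrite ltnNge -(card_in_imset cell_inj) -card_pivot_cells => /negP; apply.
apply/subset_leq_card/subsetP => _ /imsetP [y _ ->].
by rewrite inE; have [-> _ _] := cell_ok y.
Qed.

End UnitVectors.

Lemma gamma_half_bound k : 0 < gamma_half k <= Rpower ((INR k + 2) / 2) (INR k / 2).
Proof.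
have PI_gt0 := PI_RGT_0.
suff bounds j : 0 < gamma_half j <= Rpower ((INR j + 2) / 2) (INR j / 2) /\
                0 < gamma_half j.+1 <= Rpower ((INR j.+1 + 2) / 2) (INR j.+1 / 2).
  by case: (bounds k).
elim: j => [|j [[G_gt0 G_le] IH]].
  split; first by rewrite /= Rdiv_0_l Rpower_O; lra.
  rewrite [gamma_half 1]/= [INR 1]/= (_ : 1 / 2 = / 2) ?Rpower_sqrt; [|lra|field].
  have sqrt_PI : 0 < sqrt PI <= 2.
    split; first exact: sqrt_lt_R0.
    by rewrite -(sqrt_square 2); [apply: sqrt_le_1_alt; have := PI_4; lra | lra].
  have : 1 <= sqrt ((1 + 2) / 2) by rewrite -[X in X <= _]sqrt_1; apply: sqrt_le_1_alt; lra.
  lra.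
split=> //; rewrite [gamma_half _]/= !S_INR.
have j_ge0 := pos_INR j.
split; first by apply: Rmult_lt_0_compat; lra.
apply: (Rle_trans _ ((1 + INR j / 2) * Rpower ((INR j + 2) / 2) (INR j / 2))).
  by apply: Rmult_le_compat_l; lra.
rewrite (_ : (1 + INR j / 2) * _ = Rpower ((INR j + 2) / 2) (INR j / 2 + 1)); last first.
  by rewrite Rpower_plus Rpower_1; [field | lra].
rewrite (_ : (INR j + 1 + 1) / 2 = INR j / 2 + 1); last by field.
by apply: Rle_Rpower_l; lra.
Qed.

Lemma sqrt_1_plus_le {t} : 0 <= t -> sqrt (1 + t) <= 1 + t / 2.
Proof.
move=> t_ge0; rewrite -(sqrt_square (1 + t / 2)); last lra.
by apply: sqrt_le_1_alt; have := pow2_ge_0 (t / 2); simpl; lra.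
Qed.

Lemma Rpower_div x y e : 0 < x -> 0 < y -> Rpower (x / y) e = Rpower x e / Rpower y e.
Proof.
move=> x_gt0 y_gt0; rewrite /Rdiv -Rpower_mult_distr //; last exact: Rinv_0_lt_compat.
by rewrite /Rpower ln_Rinv // Ropp_mult_distr_r_reverse exp_Ropp.
Qed.

Lemma nu_prefactor_ge {n} : 2 <= n ->
  8 * PI * n * (n - 1) ^ 3 <= PI * n * (n - 1) / (2 * (sqrt (1 + 1 / (2 * (n - 1))) - 1) ^ 2).
Proof.
move=> n_ge2; have PI_gt0 := PI_RGT_0.
set s := sqrt (1 + 1 / (2 * (n - 1))) - 1.
have inv_gt0 : 0 < 1 / (2 * (n - 1)) by apply: Rdiv_lt_0_compat; lra.
have s_gt0 : 0 < s.
  suff : 1 < sqrt (1 + 1 / (2 * (n - 1))) by rewrite /s; lra.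
  by rewrite -[X in X < _]sqrt_1; apply: sqrt_lt_1_alt; split; lra.
have s_le : s <= 1 / (4 * (n - 1)).
  have := sqrt_1_plus_le (Rlt_le _ _ inv_gt0).
  by rewrite /s (_ : 1 / (2 * (n - 1)) / 2 = 1 / (4 * (n - 1))); [lra | field; lra].
have s2_gt0 : 0 < 2 * s ^ 2 by have := pow_lt s 2 s_gt0; lra.
apply: (Rmult_le_reg_r (2 * s ^ 2)) => //.
rewrite (_ : _ / _ * _ = PI * n * (n - 1)); last by field; lra.
have s_small : 4 * (n - 1) * s <= 1.
  have := Rmult_le_compat_l (4 * (n - 1)) _ _ ltac:(lra) s_le.
  by rewrite (_ : 4 * (n - 1) * (1 / (4 * (n - 1))) = 1); [lra | field; lra].
have : (4 * (n - 1) * s) ^ 2 <= 1 by have := Rmult_lt_0_compat (n - 1) s ltac:(lra) s_gt0; nra.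
have : 0 <= PI * n * (n - 1) by apply: Rmult_le_pos; [apply: Rmult_le_pos|]; lra.
nra.
Qed.

Lemma nu_ge {n} : (2 <= n)%nat ->
  16 * PI * INR n * (INR n - 1) ^ 3 / (INR n + 1) * Rpower (2 * INR n) (2 / (INR n - 1))
  <= nu n.
Proof.
move=> n_ge2; have PI_gt0 := PI_RGT_0.
have nr_ge2 : 2 <= INR n by apply: (le_INR 2); apply/leP.
rewrite /nu subn1; set nr := INR n in nr_ge2 *; set e := 2 / (nr - 1).
have e_gt0 : 0 < e by apply: Rdiv_lt_0_compat; lra.
have [G_gt0 G_le] := gamma_half_bound n.-1.
have nr1 : INR n.-1 = nr - 1 by rewrite /nr; case: (n) n_ge2 => // k _; rewrite S_INR /=; ring.
rewrite nr1 in G_le; set G := gamma_half n.-1 in G_gt0 G_le *.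
have GeQ : Rpower G e <= (nr + 1) / 2.
  apply: (Rle_trans _ (Rpower (Rpower ((nr - 1 + 2) / 2) ((nr - 1) / 2)) e)).
    by apply: Rle_Rpower_l; lra.
  rewrite Rpower_mult (_ : (nr - 1) / 2 * e = 1) ?Rpower_1; [lra | lra | rewrite /e; field; lra].
have A_ge := nu_prefactor_ge nr_ge2.
rewrite Rpower_div; [| lra | done].
have P_gt0 : 0 < Rpower (2 * nr) e by apply: exp_pos.
have Q_gt0 : 0 < Rpower G e by apply: exp_pos.
have Q_inv : 2 / (nr + 1) <= / Rpower G e.
  by rewrite (_ : 2 / (nr + 1) = / ((nr + 1) / 2)); [apply: Rinv_le_contravar | field]; lra.
rewrite (_ : 16 * PI * nr * (nr - 1) ^ 3 / (nr + 1) =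
             8 * PI * nr * (nr - 1) ^ 3 * (2 / (nr + 1))); last by field; lra.
rewrite Rmult_assoc; apply: Rmult_le_compat => //.
- by apply: Rmult_le_pos; [nra | apply/Rlt_le/pow_lt; lra].
- by apply: Rmult_le_pos; [apply/Rlt_le/Rdiv_lt_0_compat|]; lra.
- by rewrite Rmult_comm; apply: Rmult_le_compat_l; [lra | exact: Q_inv].
Qed.

Lemma Rpower_inv_pow {t k} : 0 < t -> (0 < k)%nat -> Rpower (/ t ^ k) (2 / INR k) = / t ^ 2.
Proof.
move=> t_gt0 k_gt0; have k_pos : 0 < INR k by apply: lt_0_INR; apply/ltP.
rewrite -!Rpower_pow // -!Rpower_Ropp Rpower_mult.
by congr Rpower; rewrite [INR 2]/=; field; lra.
Qed.

Lemma Rpower_ratio_ge c M t k : 0 < M -> 0 < t -> (0 < k)%nat -> M <= c * t ^ k ->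
  / t ^ 2 <= Rpower (c / M) (2 / INR k).
Proof.
move=> M_gt0 t_gt0 k_gt0 M_le; have tk_gt0 : 0 < t ^ k by apply: pow_lt.
have k_pos : 0 < INR k by apply: lt_0_INR; apply/ltP.
rewrite -(Rpower_inv_pow t_gt0 k_gt0); apply: Rle_Rpower_l.
  by apply/Rlt_le/Rdiv_lt_0_compat; lra.
split; first exact: Rinv_0_lt_compat.
apply: (Rmult_le_reg_r (t ^ k * M)); first exact: Rmult_lt_0_compat.
have -> : / t ^ k * (t ^ k * M) = M by field; lra.
have -> : c / M * (t ^ k * M) = c * t ^ k by field; lra.
exact: M_le.
Qed.

Lemma grid_bound_le n N M : 2 <= n -> 1 <= N -> 0 < M ->
  2 * (2 / M) * ((n ^ 2 - 1) * (/ N) ^ 2) <=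
  32 * PI * n * (n - 1) ^ 2 / (n + 1) / M * / (N + 1) ^ 2.
Proof.
move=> n_ge2 N_ge1 M_gt0; have PI_gt3 : 3 < PI by have := PI2_3_2; lra.
have grid : (N + 1) ^ 2 <= 4 * N ^ 2 by nra.
have dim : (n + 1) ^ 2 <= 2 * PI * n * (n - 1).
  have := Rmult_le_pos (PI - 3) (n * (n - 1)) ltac:(lra) ltac:(nra).
  have := Rmult_le_pos (n - 2) (5 * n + 2) ltac:(lra) ltac:(lra).
  simpl; lra.
apply: (Rmult_le_reg_r (M * (n + 1) * (N + 1) ^ 2 * N ^ 2)).
  by apply: Rmult_lt_0_compat; [apply: Rmult_lt_0_compat; [apply: Rmult_lt_0_compat|]|]; nra.
rewrite (_ : 2 * (2 / M) * ((n ^ 2 - 1) * (/ N) ^ 2) * _ =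
             4 * (n - 1) * ((n + 1) ^ 2 * (N + 1) ^ 2)); last by field; lra.
rewrite (_ : 32 * PI * n * (n - 1) ^ 2 / (n + 1) / M * / (N + 1) ^ 2 * _ =
             4 * (n - 1) * (2 * PI * n * (n - 1) * (4 * N ^ 2))); last by field; lra.
apply: Rmult_le_compat_l; first lra.
exact: Rmult_le_compat (pow2_ge_0 _) (pow2_ge_0 _) dim grid.
Qed.

Lemma mu_Rpower_ge {n M N} : (2 <= n)%nat -> (0 < M)%nat -> INR M <= 2 * INR n * INR N.+1 ^ n.-1 ->
  32 * PI * INR n * (INR n - 1) ^ 2 / (INR n + 1) / INR M * / INR N.+1 ^ 2 <=
  mu n * Rpower (INR M) (- ((INR n + 1) / (INR n - 1))).
Proof.
move=> n_ge2 M_gt0 M_le; have PI_gt0 := PI_RGT_0.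
have nr_ge2 : 2 <= INR n by apply: (le_INR 2); apply/leP.
have Mr_gt0 : 0 < INR M by apply: lt_0_INR; apply/ltP.
have nr1 : INR n.-1 = INR n - 1 by case: (n) n_ge2 => // k _; rewrite S_INR /=; ring.
have PT : / INR N.+1 ^ 2 <= Rpower (2 * INR n / INR M) (2 / (INR n - 1)).
  rewrite -nr1; apply: Rpower_ratio_ge => //; first by apply/lt_0_INR/ltP.
  by rewrite -subn1 subn_gt0.
rewrite Rpower_div in PT; [| lra | done].
have nu_lb := nu_ge n_ge2.
set nr := INR n in nr_ge2 PT nu_lb *; set P := Rpower (2 * nr) _ in PT nu_lb.
rewrite (_ : - ((nr + 1) / (nr - 1)) = - 1 + - (2 / (nr - 1))); last by field; lra.
rewrite Rpower_plus !Rpower_Ropp Rpower_1 // /mu.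
set T := / Rpower (INR M) _.
have T_gt0 : 0 < T by apply/Rinv_0_lt_compat/exp_pos.
apply: (Rle_trans _ (2 / (nr - 1) * (16 * PI * nr * (nr - 1) ^ 3 / (nr + 1) * P) * (/ INR M * T))).
  rewrite (_ : _ * (_ * P) * _ = 32 * PI * nr * (nr - 1) ^ 2 / (nr + 1) / INR M * (P * T));
    last by field; lra.
  apply: Rmult_le_compat_l PT; apply/Rlt_le/Rdiv_lt_0_compat => //.
  apply: Rdiv_lt_0_compat; last lra.
  by apply: Rmult_lt_0_compat; [nra | apply: pow_lt; lra].
apply: Rmult_le_compat_r; first by have := Rinv_0_lt_compat _ Mr_gt0; nra.
by apply: Rmult_le_compat_l; [apply/Rlt_le/Rdiv_lt_0_compat | ]; lra.
Qed.

Lemma mu_bound {n M N} : (2 <= n)%nat -> (0 < M)%nat -> INR M <= 2 * INR n * INR N.+2 ^ n.-1 ->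
  2 * (2 / INR M) * ((INR n ^ 2 - 1) * (/ INR N.+1) ^ 2) <=
  mu n * Rpower (INR M) (- ((INR n + 1) / (INR n - 1))).
Proof.
move=> n_ge2 M_gt0 M_le; apply: Rle_trans (mu_Rpower_ge n_ge2 M_gt0 M_le).
rewrite (S_INR N.+1); apply: grid_bound_le.
- by apply: (le_INR 2); apply/leP.
- by apply: (le_INR 1); apply/leP.
- by apply/lt_0_INR/ltP.
Qed.

Lemma INR_expn m k : INR (expn m k) = INR m ^ k.
Proof. by elim: k => [|k IH]; rewrite ?expn0 // expnS mulnE mult_INR IH. Qed.

Lemma exists_grid_size {n M} : (1 < n)%nat -> (2 * n < M)%nat ->
  exists N, (2 * n * expn N.+1 n.-1 < M <= 2 * n * expn N.+2 n.-1)%nat.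
Proof.
move=> n_gt1 M_gt.
have M_reached : exists k, (M <= 2 * n * expn k.+1 n.-1)%nat.
  exists M; have : (M.+1 <= expn M.+1 n.-1)%nat.
    by rewrite -{1}(expn1 M.+1) leq_pexp2l // -subn1 subn_gt0.
  by nia.
have [m Pm m_min] := ex_minnP M_reached.
case: m Pm m_min => [|N] M_le N_min; first by rewrite exp1n muln1 leqNgt M_gt in M_le.
by exists N; rewrite M_le andbT ltnNge; apply/negP => /N_min; rewrite ltnn.
Qed.

Lemma card_gt_mul_le_Rsum {Y : finType} {f : Y -> R} c : (forall y, 0 <= f y) ->
  INR #|~: [set y | Rle_dec (f y) c]| * c <= Rsum f.
Proof.
move=> f_ge0; rewrite /Rsum (bigID (fun y => Rle_dec (f y) c)) /=.
have := big_Rge0 (fun y => Rle_dec (f y) c) f (fun y _ => f_ge0 y).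
suff : INR #|~: [set y | Rle_dec (f y) c]| * c <=
       \big[Rplus/0]_(y | ~~ Rle_dec (f y) c) f y by lra.
have -> : #|~: [set y | Rle_dec (f y) c]| = #|(fun y => ~~ Rle_dec (f y) c)|.
  by apply: eq_card => y; rewrite !inE.
rewrite -big_Rconst; apply: big_Rle => y.
by case: Rle_dec => // f_gt _; lra.
Qed.

Definition sqrt_posterior {X Y : finType} (pi : X -> R) (W : X -> Y -> R) (y : Y) (x : X) :=
  sqrt (pi x * W x y / outprob pi W y).

Section Channel.
(* [{pi] is a token of the quotient notations of [generic_quotient], hence the backquote. *)
Context {X Y : finType} {W : X -> Y -> R} `{pi : X -> R}.
Hypotheses (W_ge0 : forall x y, 0 <= W x y) (W_sum1 : forall x, Rsum (fun y => W x y) = 1).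
Hypotheses (pi_gt0 : forall x, 0 < pi x) (pi_sum1 : Rsum pi = 1).
Hypothesis outprob_gt0 : forall y, 0 < outprob pi W y.

Lemma Rsum_outprob : Rsum (outprob pi W) = 1.
Proof.
rewrite /Rsum /outprob /Rsum exchange_big -pi_sum1 /Rsum; apply: eq_bigr => x _ /=.
by rewrite big_Rmult_l; move: (W_sum1 x); rewrite /Rsum => ->; ring.
Qed.

Lemma sqrt_posterior_unit y : unit_nonneg (sqrt_posterior pi W y).
Proof.
have p_gt0 := outprob_gt0 y.
split=> [x|]; first exact: sqrt_pos.
rewrite /Rsum (eq_bigr (fun x => / outprob pi W y * (pi x * W x y))); last first.
  move=> x _; rewrite /sqrt_posterior /= Rmult_1_r sqrt_sqrt; first by field; lra.
  by apply: Rmult_le_pos; [have := pi_gt0 x; have := W_ge0 x y; nra | apply/Rlt_le/Rinv_0_lt_compat].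
by rewrite big_Rmult_l -/(Rsum _) -/(outprob pi W y) Rinv_l //; lra.
Qed.

Lemma mutinfo_merge_le {a b K} : a != b -> outprob pi W a <= K -> outprob pi W b <= K ->
  mutinfo pi W - mutinfo pi (merge_letters W a b) <=
  2 * K * Rsum (fun x => (sqrt_posterior pi W a x - sqrt_posterior pi W b x) ^ 2).
Proof.
move=> ab pa_le pb_le; rewrite mutinfo_merge_letters // /Rsum -big_Rmult_l.
by apply: big_Rle => x _; apply: merge_loss_le_sqdist.
Qed.

Lemma card_small_outprob :
  (#|Y| <= 2 * #|[set y | Rle_dec (outprob pi W y) (2 / INR #|Y|)]|)%nat.
Proof.
set S := [set y | _]; have [-> //|Y_gt0] := posnP #|Y|.
have Y_pos : 0 < INR #|Y| by apply: lt_0_INR; apply/ltP.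
have := card_gt_mul_le_Rsum (2 / INR #|Y|) (fun y => Rlt_le _ _ (outprob_gt0 y)).
rewrite Rsum_outprob -/S => markov.
have : (2 * #|~: S| <= #|Y|)%nat.
  apply/leP/INR_le; rewrite mulnE mult_INR [INR 2]/=.
  by apply: (Rmult_le_reg_r (/ INR #|Y|)); [apply: Rinv_0_lt_compat | field_simplify; lra].
by have := cardsC S; lia.
Qed.

End Channel.

Close Scope R_scope.

Theorem theorem2 (X Y : finType) (W : X -> Y -> R) (pi : X -> R) :
  (2 <= #|X|)%N ->
  (2 * #|X| < #|Y|)%N ->
  (forall x y, (0 <= W x y)%R) ->
  (forall x, Rsum (fun y => W x y) = 1%R) ->
  (forall x, (0 < pi x)%R) ->
  Rsum pi = 1%R ->
  (forall y, (0 < outprob pi W y)%R) ->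
  exists alpha beta : Y, alpha <> beta /\
    (mutinfo pi W - mutinfo pi (merge_letters W alpha beta) <=
     mu #|X| * Rpower (INR #|Y|) (- ((INR #|X| + 1) / (INR #|X| - 1))))%R.
Proof.
move=> X_ge2 XY W_ge0 W_sum1 pi_gt0 pi_sum1 p_gt0.
have [N /andP [cells_lt Y_le]] := exists_grid_size X_ge2 XY.
set S := [set y | Rle_dec (outprob pi W y) (2 / INR #|Y|)%R].
have S_big : #|X| * expn N.+1 #|X|.-1 < #|S|.
  move: cells_lt (card_small_outprob W_sum1 pi_sum1 p_gt0); rewrite -/S -mulnA.
  by set cells := (_ * _)%nat; lia.
have [y1 [y2 [S1 S2 y12 close]]] :=
  exists_close_pair (sqrt_posterior_unit W_ge0 pi_gt0 p_gt0) S_big.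
have S_le y : y \in S -> (outprob pi W y <= 2 / INR #|Y|)%R by rewrite inE; case: Rle_dec.
exists y1, y2; split; first exact/eqP.
apply: Rle_trans (mutinfo_merge_le W_ge0 pi_gt0 p_gt0 y12 (S_le _ S1) (S_le _ S2)) _.
have Y_gt0 : 0 < #|Y| by lia.
have Y_le_R : (INR #|Y| <= 2 * INR #|X| * INR N.+2 ^ #|X|.-1)%R.
  by move/leP/le_INR: Y_le; rewrite !mult_INR INR_expn.
apply: Rle_trans (mu_bound X_ge2 Y_gt0 Y_le_R); apply: Rmult_le_compat_l close.
have K_gt0 : (0 < 2 / INR #|Y|)%R by apply: Rdiv_lt_0_compat; [lra | apply/lt_0_INR/ltP].
lra.
Qed.
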